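(* Let $\{R_\alpha\}_{\alpha\in\Lambda}$ be a family of rings and, for each $\alpha$, let $I_\alpha$ be an ideal of $R_\alpha$. Put $R=\prod_{\alpha} R_\alpha$ and $I=\prod_\alpha I_\alpha$ (an ideal of $R$). Then $R$ is weakly $I$-clean if and only if every $R_\alpha$ is weakly $I_\alpha$-clean and at most one $R_\alpha$ fails to be $I_\alpha$-clean.
   Context: All rings are associative with identity. $Idem(R)$ denotes the set of idempotents of $R$. For an ideal $I$ of a ring $R$: $R$ is $I$-clean if for every $x\in R$ there is $e\in Idem(R)$ with $x-e\in I$; $R$ is weakly $I$-clean if for every $x\in R$ there is $e\in Idem(R)$ such that $x-e\in I$ or $x+e\in I$. *)

From HB Require Import structures.
From mathcomp Require Import all_boot all_algebra.
Set Implicit Arguments. Unset Strict Implicit. Unset Printing Implicit Defensive.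
Import GRing.Theory.
Local Open Scope ring_scope.

(* Generic notions over a ring signature (carrier with add, opp, mul), so that they
   apply verbatim both to a MathComp ring and to an arbitrary (possibly
   infinite, dependent) direct product of rings, which has no MathComp
   ringType instance (it lacks decidable equality). *)
Section Generic.
Variable T : Type.
Variables (add : T -> T -> T) (opp : T -> T) (mul : T -> T -> T).

Definition is_idem (e : T) : Prop := mul e e = e.

Definition Iclean_gen (I : T -> Prop) : Prop :=
  forall x, exists e, is_idem e /\ I (add x (opp e)).

Definition weakly_Iclean_gen (I : T -> Prop) : Prop :=
  forall x, exists e, is_idem e /\ (I (add x (opp e)) \/ I (add x e)).
End Generic.

Definition is_ideal (R : pzRingType) (I : R -> Prop) : Prop :=
  [/\ I 0,
      (forall x y, I x -> I y -> I (x - y)),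
      (forall r x, I x -> I (r * x)) &
      (forall r x, I x -> I (x * r))].

Definition Iclean (R : pzRingType) (I : R -> Prop) : Prop :=
  Iclean_gen +%R (@GRing.opp R) *%R I.
Definition weakly_Iclean (R : pzRingType) (I : R -> Prop) : Prop :=
  weakly_Iclean_gen +%R (@GRing.opp R) *%R I.

Section Product.
Variables (L : Type) (R : L -> pzRingType).
Definition prodR := forall a, R a.
Definition prod_add (x y : prodR) : prodR := fun a => x a + y a.
Definition prod_opp (x : prodR) : prodR := fun a => - x a.
Definition prod_mul (x y : prodR) : prodR := fun a => x a * y a.
Definition prod_ideal (I : forall a, R a -> Prop) (x : prodR) : Prop :=
  forall a, I a (x a).

Definition prod_Iclean (I : forall a, R a -> Prop) : Prop :=
  Iclean_gen prod_add prod_opp prod_mul (prod_ideal I).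
Definition prod_weakly_Iclean (I : forall a, R a -> Prop) : Prop :=
  weakly_Iclean_gen prod_add prod_opp prod_mul (prod_ideal I).
End Product.

(* A product is weakly I-clean iff each element can be written as x = e + i or
   x = -e + i with the SAME sign in every coordinate.  If two coordinates a, b
   failed to be clean, the element equal to a witness of non-cleanness at a and
   to minus such a witness at b admits neither sign.  Conversely, if only a0
   can fail, choose the sign dictated by x a0 and use cleanness (applied to x
   or to -x) in every other coordinate. *)

From mathcomp Require Import all_boot all_algebra.
From Stdlib Require Import ClassicalEpsilon Classical Eqdep FunctionalExtensionality.
Import GRing.Theory.
Local Open Scope ring_scope.

Lemma weakly_Iclean_gen_of_clean (T : Type) (add : T -> T -> T) (opp : T -> T)
    (mul : T -> T -> T) (I : T -> Prop) :
  Iclean_gen add opp mul I -> weakly_Iclean_gen add opp mul I.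
Proof. by move=> clI x; have [e [idem_e Ie]] := clI x; exists e; split; [|left]. Qed.

Lemma idealN {R : pzRingType} {I : R -> Prop} {z : R} : is_ideal I -> I z -> I (- z).
Proof. by case=> I0 IB _ _ Iz; move: (IB _ _ I0 Iz); rewrite sub0r. Qed.

Lemma Iclean_addr {R : pzRingType} {I : R -> Prop} :
  is_ideal I -> Iclean I -> forall x, exists e, is_idem *%R e /\ I (x + e).
Proof.
move=> idI clI x; have [e [idem_e Ie]] := clI (- x).
by exists e; split => //; move: (idealN idI Ie); rewrite opprD !opprK.
Qed.

Lemma not_IcleanP {R : pzRingType} {I : R -> Prop} :
  ~ Iclean I -> exists x, forall e, is_idem *%R e -> ~ I (x - e).
Proof.
move=> nclI; apply: NNPP => noW; apply: nclI => x; apply: NNPP => nox.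
by apply: noW; exists x => e idem_e Ie; apply: nox; exists e.
Qed.

Section ProductRing.
Context {L : Type} {R : L -> pzRingType}.

Definition prod_update {a : L} (v : R a) (d : prodR R) : prodR R :=
  fun b => match excluded_middle_informative (a = b) with
           | left h => eq_rect a R v b h
           | right _ => d b
           end.

Lemma prod_update_same a (v : R a) d : prod_update v d a = v.
Proof.
rewrite /prod_update; case: excluded_middle_informative => [h|[]] //.
by rewrite -Eqdep.EqdepTheory.eq_rect_eq.
Qed.

Lemma prod_update_other a (v : R a) d b : a <> b -> prod_update v d b = d b.
Proof. by rewrite /prod_update; case: excluded_middle_informative. Qed.

Lemma prod_idemE (e : prodR R) :
  is_idem (@prod_mul L R) e <-> forall a, is_idem *%R (e a).
Proof.
split=> [idem_e a|idem_e]; first exact: (f_equal (fun f => f a) idem_e).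
exact: functional_extensionality_dep.
Qed.

Lemma prod_idem_choice (P : forall a, R a -> Prop) :
  (forall a, exists e, is_idem *%R e /\ P a e) ->
  exists e : prodR R, is_idem (@prod_mul L R) e /\ forall a, P a (e a).
Proof.
move=> exP; pose e a := proj1_sig (constructive_indefinite_description _ (exP a)).
have eP a : is_idem *%R (e a) /\ P a (e a).
  exact: proj2_sig (constructive_indefinite_description _ (exP a)).
by exists e; split => [|a]; [apply/prod_idemE => a|]; case: (eP a).
Qed.

Context {I : forall a, R a -> Prop}.
Hypothesis idI : forall a, is_ideal (I a).

Lemma prod_weakly_Iclean_proj : prod_weakly_Iclean I -> forall a, weakly_Iclean (I a).
Proof.
move=> wclP a x; have [e [/prod_idemE idem_e Ie]] := wclP (prod_update x (fun=> 0)).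
exists (e a); split; first exact: idem_e.
by case: Ie => Ie; [left|right]; move: (Ie a); rewrite /prod_add /prod_opp prod_update_same.
Qed.

Lemma prod_weakly_Iclean_unique_unclean : prod_weakly_Iclean I ->
  forall a b, ~ Iclean (I a) -> ~ Iclean (I b) -> a = b.
Proof.
move=> wclP a b /not_IcleanP[xa xaP] /not_IcleanP[xb xbP]; apply: NNPP => neq_ab.
have [e [/prod_idemE idem_e [Ie|Ie]]] :=
  wclP (prod_update xa (prod_update (- xb) (fun=> 0))).
- by apply: (xaP _ (idem_e a)); move: (Ie a); rewrite /prod_add /prod_opp prod_update_same.
- apply: (xbP _ (idem_e b)); move: (Ie b).
  rewrite /prod_add prod_update_other // prod_update_same => /(idealN (idI b)).
  by rewrite opprD opprK.
Qed.

Lemma prod_weakly_Iclean_of_clean_off (a0 : L) :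
  weakly_Iclean (I a0) -> (forall a, a <> a0 -> Iclean (I a)) -> prod_weakly_Iclean I.
Proof.
move=> wcl0 clI x; have [e0 [idem_e0 [Ie0|Ie0]]] := wcl0 (x a0).
- case: (@prod_idem_choice (fun a e => I a (x a - e))) => [a|e [idem_e Ie]].
    case: (classic (a = a0)) => [->|neq_a].
      by exists e0.
    exact: clI.
  by exists e; split; [|left].
- case: (@prod_idem_choice (fun a e => I a (x a + e))) => [a|e [idem_e Ie]].
    case: (classic (a = a0)) => [->|neq_a].
      by exists e0.
    exact: Iclean_addr (idI a) (clI a neq_a) (x a).
  by exists e; split; [|right].
Qed.

Lemma prod_Iclean_of_clean : (forall a, Iclean (I a)) -> prod_Iclean I.
Proof.
by move=> clI x; apply: (@prod_idem_choice (fun a e => I a (x a - e))) => a; apply: clI.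
Qed.

End ProductRing.

Theorem mainTheorem1 (L : Type) (R : L -> pzRingType)
    (I : forall a, R a -> Prop) (hI : forall a, is_ideal (I a)) :
  prod_weakly_Iclean I <->
  ((forall a, weakly_Iclean (I a)) /\
   (forall a b, ~ Iclean (I a) -> ~ Iclean (I b) -> a = b)).
Proof.
split=> [wclP|[wclI uniq_unclean]].
  by split; [apply: prod_weakly_Iclean_proj | apply: prod_weakly_Iclean_unique_unclean].
case: (classic (exists a0, ~ Iclean (I a0))) => [[a0 nclI0]|all_clean].
  apply: (prod_weakly_Iclean_of_clean_off hI a0 (wclI a0)) => a neq_a.
  by apply: NNPP => nclI; apply: neq_a; apply: uniq_unclean.
apply/weakly_Iclean_gen_of_clean/prod_Iclean_of_clean => a.
by apply: NNPP => nclI; apply: all_clean; exists a.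
Qed.
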